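(* Under Assumptions 1–4 below, the iterates of Algorithm 2Direction satisfy, for every $t\ge0$, $$\mathbb E_t\big[\|g^{t+1}-\nabla f(y^{t+1})\|^2\big]\le\frac{2\omega}{n^2}\sum_{i=1}^n\|\nabla f_i(z^t)-h_i^t\|^2+\frac{4\omega L_{\max}}{n}\big(f(z^t)-f(y^{t+1})-\langle\nabla f(y^{t+1}),z^t-y^{t+1}\rangle\big).$$
   Context: Setting: $f=\frac1n\sum_{i=1}^nf_i$, $f_i:\mathbb R^d\to\mathbb R$. Assumption 1: each $f_i$ is $L_i$-smooth, $L_{\max}=\max_iL_i$, and $\widehat L>0$ satisfies $\frac1n\sum_i\|\nabla f_i(x)-\nabla f_i(y)\|^2\le\widehat L^2\|x-y\|^2$ for all $x,y$. Assumption 2: $f$ is $L$-smooth. Assumption 3: each $f_i$ is convex and $f$ is $\mu$-strongly convex ($\mu\ge0$) with minimizer $x^*$. Assumption 4: the randomness of all compressors is drawn independently (of each other, of the coins $c^t$, and of the past). Compressor classes: $\mathbb U(\omega)$ ($\omega\ge0$) = stochastic maps $\mathcal C$ with $\mathbb E\mathcal C(x)=x$, $\mathbb E\|\mathcal C(x)-x\|^2\le\omega\|x\|^2$; $\mathbb B(\alpha)$ ($\alpha\in(0,1]$) = possibly stochastic maps with $\mathbb E\|\mathcal C(x)-x\|^2\le(1-\alpha)\|x\|^2$. Algorithm 2Direction: compressors $\mathcal C_i^{D,y},\mathcal C_i^{D,z}\in\mathbb U(\omega)$ (workers), $\mathcal C^P\in\mathbb B(\alpha)$ (server); parameters $\bar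 L>0$, $\mu\ge0$, $p\in(0,1]$, $\Gamma_0\ge1$, $\tau\in(0,1]$, $x^0,h_1^0,\dots,h_n^0,k^0,v^0\in\mathbb R^d$. Set $\beta=1/(\omega+1)$, $w^0=z^0=u^0=x^0$, $h^0=\frac1n\sum_ih_i^0$, $\theta_{\min}=\frac14\min\{1,\alpha/p,\tau/p,\beta/p\}$. For $t=0,1,\dots$: let $\bar\theta_{t+1}$ be the largest root of $p\bar L\Gamma_t\theta^2+p(\bar L+\Gamma_t\mu)\theta-(\bar L+\Gamma_t\mu)=0$, $\theta_{t+1}=\min\{\bar\theta_{t+1},\theta_{\min}\}$, $\gamma_{t+1}=p\theta_{t+1}\Gamma_t/(1-p\theta_{t+1})$, $\Gamma_{t+1}=\Gamma_t+\gamma_{t+1}$; $y^{t+1}=\theta_{t+1}w^t+(1-\theta_{t+1})z^t$; $m_i^{t,y}=\mathcal C_i^{D,y}(\nabla f_i(y^{t+1})-h_i^t)$; $g^{t+1}=h^t+\frac1n\sum_im_i^{t,y}$; $u^{t+1}=\arg\min_x\{\langle g^{t+1},x\rangle+\frac{\bar L+\Gamma_t\mu}{2\gamma_{t+1}}\|x-u^t\|^2+\frac\mu2\|x-y^{t+1}\|^2\}$; $q^{t+1}=\arg\min_x\{\langle k^t,x\rangle+\frac{\bar L+\Gamma_t\mu}{2\gamma_{t+1}}\|x-w^t\|^2+\frac\mu2\|x-y^{t+1}\|^2\}$; $w^{t+1}=q^{t+1}+\mathcal C^P(u^{t+1}-q^{t+1})$; $x^{t+1}=\theta_{t+1}u^{t+1}+(1-\theta_{t+1})z^t$;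 draw $c^t\sim\mathrm{Bernoulli}(p)$, and set $(k^{t+1},z^{t+1})=(v^t,x^{t+1})$ if $c^t=1$, $(k^{t+1},z^{t+1})=(k^t,z^t)$ if $c^t=0$; $m_i^{t,z}=\mathcal C_i^{D,z}(\nabla f_i(z^{t+1})-h_i^t)$; $h_i^{t+1}=h_i^t+\beta m_i^{t,z}$; $v^{t+1}=(1-\tau)v^t+\tau(h^t+\frac1n\sum_im_i^{t,z})$; $h^{t+1}=h^t+\frac\beta n\sum_im_i^{t,z}$. $\mathbb E_t$ denotes conditional expectation given the randomness of the first $t$ iterations. *)

From HB Require Import structures.
From mathcomp Require Import all_boot all_order all_algebra.
From mathcomp Require Import all_classical all_reals all_analysis.
Set Implicit Arguments. Unset Strict Implicit. Unset Printing Implicit Defensive.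
Import Order.TTheory GRing.Theory Num.Theory.
Import numFieldNormedType.Exports.
Local Open Scope classical_set_scope.
Local Open Scope ring_scope.

Section Defs.
Variable R : realType.
Variable d : nat.
Notation vec := 'rV[R]_d.

Definition dotv (x y : vec) : R := \sum_(j < d) x 0 j * y 0 j.
Definition sqnorm (x : vec) : R := dotv x x.
Definition enorm (x : vec) : R := Num.sqrt (sqnorm x).

Definition grad (f : vec -> R) (x : vec) : vec :=
  \row_(j < d) ('D_(delta_mx 0 j) f x).

Definition smooth (L : R) (f : vec -> R) : Prop :=
  (forall x, differentiable f x) /\
  (forall x y, enorm (grad f x - grad f y) <= L * enorm (x - y)).

Definition convex_fun (f : vec -> R) : Prop :=
  forall (x y : vec) (a : R), 0 <= a <= 1 ->
    f (a *: x + (1 - a) *: y) <= a * f x + (1 - a) * f y.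

Definition strongly_convex (mu : R) (f : vec -> R) : Prop :=
  forall x y : vec, f x + dotv (grad f x) (y - x) + mu / 2 * sqnorm (y - x) <= f y.

Definition avgf (n : nat) (fs : 'I_n -> vec -> R) : vec -> R :=
  fun x => n%:R^-1 * \sum_(i < n) fs i x.

Definition Lmax (n : nat) (L : 'I_n -> R) : R := \big[Num.max/0]_(i < n) L i.

(* Compressor class U(omega): a stochastic map, its randomness drawn from
   the probability space (Omega, P): C : Omega -> (R^d -> R^d). *)
Definition unbiased_compressor {dd} {Omega : measurableType dd}
    (P : probability Omega R) (omega : R) (C : Omega -> vec -> vec) : Prop :=
  forall x : vec,
    (forall j : 'I_d, measurable_fun setT (fun w => C w x 0 j)) /\
    (forall j : 'I_d, P.-integrable setT (fun w => (C w x 0 j)%:E) /\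
                      (\int[P]_w (C w x 0 j)%:E = (x 0 j)%:E)%E) /\
    (\int[P]_w (sqnorm (C w x - x))%:E <= (omega * sqnorm x)%:E)%E.

(* Mutual independence of a finite family of random vectors X i : Omega -> R^d
   (product rule over the measurable rectangles of R^d, which generate the
   Borel sigma-algebra of R^d and form a pi-system; taking B i j = setT for
   the indices outside a subfamily gives the rule for every subfamily). *)
Definition indep_rvecs {dd} {Omega : measurableType dd}
    (P : probability Omega R) (n : nat) (X : 'I_n -> Omega -> vec) : Prop :=
  forall B : 'I_n -> 'I_d -> set R,
    (forall i j, measurable (B i j)) ->
    fine (P [set w | forall i j, B i j (X i w 0 j)]) =
    \prod_(i < n) fine (P [set w | forall j, B i j (X i w 0 j)]).

(* Assumption 4 (for the worker compressors C_i^{D,y}): their randomness is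
   drawn independently, so for any inputs the outputs are independent. *)
Definition indep_compressors {dd} {Omega : measurableType dd}
    (P : probability Omega R) (n : nat) (C : 'I_n -> Omega -> vec -> vec) : Prop :=
  forall xs : 'I_n -> vec, indep_rvecs P (fun i w => C i w (xs i)).

End Defs.

(* With a_i = grad f_i(y) - h_i, the error g - grad f(y) is the average of the
   compression errors X_i = C_i(a_i) - a_i.  These are independent and centered,
   so the cross terms E<X_i, X_k> vanish and
   E|g - grad f(y)|^2 = n^-2 sum_i E|X_i|^2 <= omega n^-2 sum_i |a_i|^2.
   Then |a_i|^2 <= 2|grad f_i(z) - h_i|^2 + 2|grad f_i(y) - grad f_i(z)|^2, and
   for convex L_i-smooth f_i the last term is at most 2 L_i times the Bregman
   divergence of f_i between z and y (cocoercivity); these divergences average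
   to the Bregman divergence of f. *)

From HB Require Import structures.
From mathcomp Require Import all_boot all_order all_algebra.
From mathcomp Require Import all_classical all_reals all_analysis.
From mathcomp Require Import measurable_realfun.
From mathcomp Require Import ring lra.
Import Order.TTheory GRing.Theory Num.Theory.
Import numFieldNormedType.Exports.
Local Open Scope classical_set_scope.
Local Open Scope ring_scope.
Set Implicit Arguments. Unset Strict Implicit. Unset Printing Implicit Defensive.

Section Euclid.
Variables (R : realType) (d : nat).
Local Notation vec := 'rV[R]_d.
Implicit Types a b c : vec.

Lemma dotvC a b : dotv a b = dotv b a.
Proof. by apply: eq_bigr => j _; rewrite mulrC. Qed.

Lemma dotvDl a b c : dotv (a + b) c = dotv a c + dotv b c.
Proof. by rewrite /dotv -big_split; apply: eq_bigr => j _; rewrite !mxE mulrDl. Qed.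

Lemma dotvNl a b : dotv (- a) b = - dotv a b.
Proof. by rewrite /dotv -sumrN; apply: eq_bigr => j _; rewrite !mxE mulNr. Qed.

Lemma dotvZl k a b : dotv (k *: a) b = k * dotv a b.
Proof. by rewrite /dotv mulr_sumr; apply: eq_bigr => j _; rewrite !mxE mulrA. Qed.

Lemma dotvBl a b c : dotv (a - b) c = dotv a c - dotv b c.
Proof. by rewrite dotvDl dotvNl. Qed.

Lemma dotvDr a b c : dotv a (b + c) = dotv a b + dotv a c.
Proof. by rewrite dotvC dotvDl !(dotvC a). Qed.

Lemma dotvBr a b c : dotv a (b - c) = dotv a b - dotv a c.
Proof. by rewrite dotvC dotvBl !(dotvC a). Qed.

Lemma dotvZr k a b : dotv a (k *: b) = k * dotv a b.
Proof. by rewrite dotvC dotvZl dotvC. Qed.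

Lemma dotv_suml n (v : 'I_n -> vec) b :
  dotv (\sum_(i < n) v i) b = \sum_(i < n) dotv (v i) b.
Proof.
rewrite /dotv exchange_big /=; apply: eq_bigr => j _.
by rewrite summxE mulr_suml.
Qed.

Lemma sqr_coord_le_sqnorm a j : a 0 j ^+ 2 <= sqnorm a.
Proof.
rewrite /sqnorm /dotv (bigD1 j) //= expr2 lerDl.
by apply: sumr_ge0 => k _; rewrite -expr2 sqr_ge0.
Qed.

Lemma sqnorm_ge0 a : 0 <= sqnorm a.
Proof. by apply: sumr_ge0 => j _; rewrite -expr2 sqr_ge0. Qed.

Lemma sqnorm_eq0 a : (sqnorm a == 0) = (a == 0).
Proof.
apply/idP/eqP => [|->]; last by rewrite /sqnorm /dotv big1 // => j _; rewrite mxE mul0r.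
rewrite psumr_eq0 => [/allP a0|j _]; last by rewrite -expr2 sqr_ge0.
apply/rowP => j; rewrite mxE.
by have /implyP/(_ isT) := a0 j (mem_index_enum j); rewrite -expr2 sqrf_eq0 => /eqP.
Qed.

Lemma sqnormZ k a : sqnorm (k *: a) = k ^+ 2 * sqnorm a.
Proof. by rewrite /sqnorm dotvZl dotvZr mulrA -expr2. Qed.

Lemma sqnormN a : sqnorm (- a) = sqnorm a.
Proof. by rewrite -scaleN1r sqnormZ sqrrN expr1n mul1r. Qed.

Lemma sqnormB a b : sqnorm (a - b) = sqnorm a - 2 * dotv a b + sqnorm b.
Proof. by rewrite /sqnorm dotvBl !dotvBr (dotvC b a); ring. Qed.

Lemma sqnormD_le a b : sqnorm (a + b) <= 2 * sqnorm a + 2 * sqnorm b.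
Proof.
have := sqnorm_ge0 (a - b); rewrite sqnormB /sqnorm dotvDl !dotvDr (dotvC b a).
lra.
Qed.

Lemma sqnorm_sum n (v : 'I_n -> vec) :
  sqnorm (\sum_(i < n) v i) = \sum_(i < n) \sum_(k < n) dotv (v i) (v k).
Proof.
rewrite /sqnorm dotv_suml; apply: eq_bigr => i _.
by rewrite dotvC dotv_suml; apply: eq_bigr => k _; rewrite dotvC.
Qed.

Lemma enorm_ge0 a : 0 <= enorm a.
Proof. exact: sqrtr_ge0. Qed.

Lemma enorm_sqr a : enorm a ^+ 2 = sqnorm a.
Proof. by rewrite sqr_sqrtr // sqnorm_ge0. Qed.

Lemma enormZ k a : enorm (k *: a) = `|k| * enorm a.
Proof. by rewrite /enorm sqnormZ sqrtrM ?sqr_ge0 // sqrtr_sqr. Qed.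

Lemma dotv_sqr_le a b : dotv a b ^+ 2 <= sqnorm a * sqnorm b.
Proof.
have [/eqP|a0] := eqVneq (sqnorm a) 0.
  rewrite sqnorm_eq0 => /eqP->.
  by rewrite /dotv big1 ?expr0n ?mulr_ge0 ?sqnorm_ge0 // => j _; rewrite mxE mul0r.
(* |A b - D a|^2 = A (A B - D^2) for A = |a|^2, B = |b|^2, D = <a, b> *)
have := sqnorm_ge0 (sqnorm a *: b - dotv a b *: a).
rewrite sqnormB !sqnormZ dotvZl dotvZr (dotvC b a).
have pa : 0 < sqnorm a by rewrite lt_def a0 sqnorm_ge0.
by rewrite -subr_ge0; nra.
Qed.

Lemma dotv_le_enorm a b : dotv a b <= enorm a * enorm b.
Proof.
rewrite -sqrtrM ?sqnorm_ge0 //; apply: le_trans (ler_norm _) _.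
by rewrite -sqrtr_sqr ler_sqrt ?dotv_sqr_le // mulr_ge0 ?sqnorm_ge0.
Qed.

End Euclid.

Section Calculus.
Variables (R : realType) (d : nat).
Local Notation vec := 'rV[R]_d.
Implicit Types (f : vec -> R) (x y v : vec).

Definition bregman f x y : R := f x - f y - dotv (grad f y) (x - y).

Lemma derive_grad f x v : differentiable f x -> 'D_v f x = dotv (grad f x) v.
Proof.
move=> df; rewrite deriveE // {1}(row_sum_delta v) linear_sum.
by apply: eq_bigr => j _; rewrite linearZ /= mxE deriveE // mulrC.
Qed.

Lemma is_derive_along f y v (t : R) : (forall x, differentiable f x) ->
  is_derive t 1 (fun s : R => f (y + s *: v)) (dotv (grad f (y + t *: v)) v).
Proof.
move=> df.
have quotE : (fun h : R => h^-1 *: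
      (((fun s : R => f (y + s *: v)) \o shift t) (h *: 1) - f (y + t *: v)))
    = (fun h : R => h^-1 *: ((f \o shift (y + t *: v)) (h *: v) - f (y + t *: v))).
  by apply/funext => h /=; rewrite [h%:A]mulr1 scalerDl addrCA addrA.
have dv : derivable f (y + t *: v) v by apply: diff_derivable.
by split; rewrite /derivable /derive quotE // -derive_grad.
Qed.

Lemma smooth_le f L M : smooth L f -> L <= M -> smooth M f.
Proof.
move=> [df lip] LM; split=> // x y; apply: le_trans (lip x y) _.
by rewrite ler_wpM2r ?enorm_ge0.
Qed.

Lemma bregman_le_smooth f L x y : smooth L f -> bregman f x y <= L / 2 * sqnorm (x - y).
Proof.
move=> [df lip]; rewrite /bregman; set v := x - y.
set c0 := dotv (grad f y) v; set K := L * sqnorm v.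
(* F is the gap between f on [y, x] and its quadratic model; MVT gives F 1 <= F 0 *)
pose F := (fun s : R => f (y + s *: v)) - c0 \*: (@id R) - (K / 2) \*: ((@id R) * (@id R)).
have FE (s : R) : F s = f (y + s *: v) - c0 * s - K / 2 * (s * s) by [].
have F'E (s : R) : is_derive s 1 F (dotv (grad f (y + s *: v)) v - c0 - K * s).
  have -> : dotv (grad f (y + s *: v)) v - c0 - K * s
      = dotv (grad f (y + s *: v)) v - c0 *: 1 - (K / 2) *: (s *: 1 + s *: 1).
    by rewrite /GRing.scale /=; field.
  have lin : is_derive s 1 (c0 \*: (@id R)) (c0 *: 1) by apply: is_deriveZ.
  have sq : is_derive s (1 : R) ((@id R) * (@id R)) (s *: 1 + s *: 1) by apply: is_deriveM.
  exact: is_deriveB (is_deriveB (is_derive_along _ _ _ df) lin) (is_deriveZ _ sq).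
have F'le (s : R) : 0 <= s -> dotv (grad f (y + s *: v)) v - c0 - K * s <= 0.
  move=> s0; rewrite subr_le0 /c0 -dotvBl; apply: le_trans (dotv_le_enorm _ _) _.
  apply: le_trans (ler_wpM2r (enorm_ge0 _) (lip _ _)) _.
  by rewrite addrC addKr enormZ ger0_norm // /K -enorm_sqr; lra.
have cF : {within `[0, 1], continuous F}.
  by apply: derivable_within_continuous => s _; have [] := F'E s.
have [c /andP[c0' _] Hc] := MVT_segment ler01 (fun s _ => F'E s) cF.
rewrite bnd_simp in c0'; rewrite subr0 mulr1 in Hc; move: (F'le c c0'); rewrite -Hc !FE.
rewrite scale0r scale1r addr0 (addrC y) subrK /K; lra.
Qed.

Lemma bregman_ge0 f x y : convex_fun f -> differentiable f y -> 0 <= bregman f x y.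
Proof.
move=> cf dfy; rewrite /bregman -derive_grad // subr_ge0; set v := x - y.
have dv : derivable f y v by apply: diff_derivable.
rewrite /derive (cvg_at_rightE _ 0) //.
apply: limr_le.
  rewrite -(cvg_at_rightE (fun h : R => h^-1 *: ((f \o shift y) (h *: v) - f y))) //.
  apply: cvg_trans dv; apply: cvg_app.
  by move=> A [e e0 Ae]; exists e => // z ze z0; apply: Ae => //; exact/lt0r_neq0.
near=> h.
have h0 : 0 < h by near: h; exact: nbhs_right_gt.
have h1 : h < 1 by near: h; exact: nbhs_right_lt.
have := cf x y h; rewrite (ltW h0) (ltW h1) => /(_ isT).
have -> : h *: x + (1 - h) *: y = h *: v + y.
  by rewrite /v scalerBr scalerBl scale1r addrCA addrC.
by rewrite /GRing.scale /= ler_pdivrMl // => ?; nra.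
Unshelve. all: by end_near.
Qed.

Lemma bregman_cocoercive f L x y : 0 <= L -> smooth L f -> convex_fun f ->
  sqnorm (grad f x - grad f y) <= 2 * L * bregman f x y.
Proof.
rewrite le_eqVlt => /predU1P[<- [_ lip] _ | L0 sm cf].
  have e0 : enorm (grad f x - grad f y) = 0.
    by apply/le_anti; rewrite enorm_ge0 andbT (le_trans (lip x y)) ?mul0r.
  by rewrite -enorm_sqr e0 expr0n mulr0 mul0r.
have [df _] := sm; set D := grad f x - grad f y.
(* compare f at u = x - D / L with its models at y (convexity) and at x (smoothness) *)
set u := x - L^-1 *: D.
have lower := bregman_ge0 u cf (df y).
have upper := bregman_le_smooth u x sm.
move: lower upper; rewrite /bregman.
have -> : u - x = (- L^-1) *: D by rewrite /u addrAC subrr add0r scaleNr.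
have -> : u - y = (x - y) + (- L^-1) *: D by rewrite /u addrAC scaleNr.
rewrite dotvDr !dotvZr sqnormZ sqrrN.
have quad : L / 2 * (L^-1 ^+ 2 * sqnorm D) = L^-1 / 2 * sqnorm D by field; rewrite gt_eqF.
have DD : sqnorm D = dotv (grad f x) D - dotv (grad f y) D by rewrite /sqnorm dotvBl.
rewrite quad DD => lower upper.
have -> : dotv (grad f x) D - dotv (grad f y) D
    = 2 * L * (L^-1 / 2 * (dotv (grad f x) D - dotv (grad f y) D)).
  by field; rewrite gt_eqF.
by rewrite ler_pM2l ?mulr_gt0 //; lra.
Qed.

Lemma sqnorm_grad_shift_le f L M y z (h : vec) :
  smooth L f -> convex_fun f -> L <= M -> 0 <= M ->
  sqnorm (grad f y - h) <= 2 * sqnorm (grad f z - h) + 4 * M * bregman f z y.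
Proof.
move=> sm cf LM M0.
have -> : grad f y - h = (grad f z - h) + - (grad f z - grad f y).
  by rewrite opprB [RHS]addrC [RHS]addrA addrNK.
apply: le_trans (sqnormD_le _ _) _; rewrite sqnormN lerD2l.
have := bregman_cocoercive z y M0 (smooth_le sm LM) cf; lra.
Qed.

End Calculus.

Section Average.
Variables (R : realType) (d n : nat) (fs : 'I_n -> 'rV[R]_d -> R).
Local Notation vec := 'rV[R]_d.

Lemma grad_avgf x : (forall i, differentiable (fs i) x) ->
  grad (avgf fs) x = n%:R^-1 *: \sum_(i < n) grad (fs i) x.
Proof.
move=> df; have -> : avgf fs = n%:R^-1 \*: \sum_(i < n) fs i.
  by apply/funext => w; rewrite /avgf /= fct_sumE.
have dfs i : derivable (fs i) x _ by apply: diff_derivable.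
apply/rowP => j; rewrite !mxE deriveZ ?derive_sum //; last exact: derivable_sum.
by rewrite summxE; congr (_ * _); apply: eq_bigr => i _; rewrite mxE.
Qed.

Lemma bregman_avgf x y : (forall i, differentiable (fs i) y) ->
  bregman (avgf fs) x y = n%:R^-1 * \sum_(i < n) bregman (fs i) x y.
Proof.
move=> df; rewrite /bregman grad_avgf // dotvZl dotv_suml /avgf -!mulrBr.
by rewrite !sumrB.
Qed.

Lemma sum_sqnorm_grad_shift_le (L : 'I_n -> R) (hs : 'I_n -> vec) y z :
  (forall i, smooth (L i) (fs i)) -> (forall i, convex_fun (fs i)) ->
  \sum_(i < n) sqnorm (grad (fs i) y - hs i) <=
  2 * \sum_(i < n) sqnorm (grad (fs i) z - hs i)
  + 4 * Lmax L * \sum_(i < n) bregman (fs i) z y.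
Proof.
move=> sm cf; rewrite !mulr_sumr -big_split /=; apply: ler_sum => i _.
apply: sqnorm_grad_shift_le (sm i) (cf i) _ _; last exact: bigmax_ge_id.
exact: le_bigmax.
Qed.

End Average.

Section Independence.
Context {R : realType} {dd : measure_display} {Omega : measurableType dd}.
Variable P : probability Omega R.
Local Open Scope ereal_scope.

Lemma integralM_indep (U V : Omega -> R) :
  measurable_fun setT U -> measurable_fun setT V ->
  P.-integrable setT (EFin \o U) -> P.-integrable setT (EFin \o V) ->
  P.-integrable setT (fun w => (U w * V w)%:E) ->
  (forall A B : set R, measurable A -> measurable B ->
     P (U @^-1` A `&` V @^-1` B) = P (U @^-1` A) * P (V @^-1` B)) ->
  \int[P]_w (U w * V w)%:E = \int[P]_w (U w)%:E * \int[P]_w (V w)%:E.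
Proof.
move=> mU mV iU iV iUV indUV.
have mUV : measurable_fun setT (fun w => (U w, V w)) by apply: measurable_fun_pair.
pose muU := distribution P (mfun_Sub (mem_set mU)).
pose muV := distribution P (mfun_Sub (mem_set mV)).
pose muUV := distribution P (mfun_Sub (mem_set mUV)).
(* by independence the law of (U, V) is the product of the laws of U and V, so
   Fubini splits the integral *)
have joint_prod X : measurable X -> (muU \x muV) X = muUV X.
  apply: product_measure_unique => A B mA mB.
  by rewrite /muUV /muU /muV /distribution /pushforward /= -indUV.
have mmul : measurable_fun setT (fun p : R * R => (p.1 * p.2)%:E).
  by apply/measurable_EFinP; apply: measurable_funM; [exact: measurable_fst | exact: measurable_snd].
have imul : (muU \x muV).-integrable setT (fun p : R * R => (p.1 * p.2)%:E).
  apply/integrableP; split => //.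
  rewrite (eq_measure_integral muUV); last by move=> A mA _; apply: joint_prod.
  by have /integrableP[] : muUV.-integrable setT (fun p : R * R => (p.1 * p.2)%:E)
    by exact: integrable_pushforward.
have iV' : muV.-integrable setT (@EFin R) by exact: integrable_pushforward.
have iU' : muU.-integrable setT (@EFin R) by exact: integrable_pushforward.
have EV : \int[muV]_y y%:E = \int[P]_w (V w)%:E by rewrite integral_distribution.
have EU : \int[muU]_y y%:E = \int[P]_w (U w)%:E by rewrite integral_distribution.
have finV : \int[P]_w (V w)%:E \is a fin_num by exact: integrable_fin_num.
have -> : \int[P]_w (U w * V w)%:E = \int[muU \x muV]_p (p.1 * p.2)%:E.
  rewrite (eq_measure_integral muUV); last by move=> A mA _; exact: joint_prod.
  by rewrite integral_distribution.
rewrite -integral12_prod_meas1 // /fubini_F /=.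
under eq_integral => x _.
  rewrite (_ : \int[muV]_y (x * y)%:E = x%:E * \int[muV]_y y%:E); last first.
    by rewrite -integralZl.
  rewrite EV -(fineK finV).
  over.
by rewrite integralZr // EU fineK.
Qed.

End Independence.

Section RandomVectors.
Context {R : realType} {d : nat} {dd : measure_display} {Omega : measurableType dd}.
Variable P : probability Omega R.
Local Notation vec := 'rV[R]_d.

Definition centered_rvec (X : Omega -> vec) : Prop := forall j : 'I_d,
  [/\ measurable_fun setT (fun w => X w 0 j),
      P.-integrable setT (fun w => (X w 0 j)%:E)
    & (\int[P]_w (X w 0 j)%:E = 0)%E].

Lemma unbiased_compressor_centered omega (C : Omega -> vec -> vec) x :
  unbiased_compressor P omega C -> centered_rvec (fun w => C w x - x).
Proof.
move=> /(_ x)[mC [iC _]] j; have [iCj ECj] := iC j.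
have -> : (fun w => (C w x - x) 0 j) = (fun w => C w x 0 j - x 0 j).
  by apply/funext => w; rewrite !mxE.
have -> : (fun w => ((C w x - x) 0 j)%:E) = (fun w => (C w x 0 j)%:E - (x 0 j)%:E)%E.
  by apply/funext => w; rewrite !mxE.
have icst : P.-integrable setT (fun=> (x 0 j)%:E) by exact: finite_measure_integrable_cst.
split; [exact: measurable_funB | exact: (integrableB measurableT) |].
rewrite (integralB measurableT) // ECj integral_cst //.
by rewrite [X in (_ * X)%E]probability_setT mule1 subee.
Qed.

Lemma indep_rvecs_shift n (X : 'I_n -> Omega -> vec) (c : 'I_n -> vec) :
  indep_rvecs P X -> indep_rvecs P (fun i w => X i w - c i).
Proof.
move=> indX B mB.
pose B' i j := [set r | B i j (r - c i 0 j)].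
have mB' i j : measurable (B' i j).
  have mshift : measurable_fun setT (fun r : R => r - c i 0 j) by apply: measurable_funB.
  by have := mshift measurableT _ (mB i j); rewrite setTI.
have joint : [set w | forall i j, B i j ((X i w - c i) 0 j)]
    = [set w | forall i j, B' i j (X i w 0 j)].
  by apply/seteqP; split => w /= H i j; move: (H i j); rewrite !mxE.
have row i : [set w | forall j, B i j ((X i w - c i) 0 j)]
    = [set w | forall j, B' i j (X i w 0 j)].
  by apply/seteqP; split => w /= H j; move: (H j); rewrite !mxE.
by rewrite /= joint indX //; apply: eq_bigr => i _; rewrite row.
Qed.

Lemma indep_rvecs_coord_pair n (X : 'I_n -> Omega -> vec) i k (j1 j2 : 'I_d)
    (A B : set R) :
  (forall i j, measurable_fun setT (fun w => X i w 0 j)) -> indep_rvecs P X ->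
  i != k -> measurable A -> measurable B ->
  P ((fun w => X i w 0 j1) @^-1` A `&` (fun w => X k w 0 j2) @^-1` B) =
  (P ((fun w => X i w 0%R j1) @^-1` A) * P ((fun w => X k w 0%R j2) @^-1` B))%E.
Proof.
move=> mX indX ik mA mB; have ki : k != i by rewrite eq_sym.
set XA := _ @^-1` A; set XB := _ @^-1` B.
have mXA : measurable XA by rewrite -[XA]setTI; exact: mX.
have mXB : measurable XB by rewrite -[XB]setTI; exact: mX.
pose single (j0 : 'I_d) (S : set R) j := if j == j0 then S else setT.
pose Bf i' := if i' == i then single j1 A else if i' == k then single j2 B else fun=> setT.
have mBf i' j : measurable (Bf i' j).
  by rewrite /Bf /single; do 3?case: ifP.
have single_event i' j0 S :
    [set w | forall j, single j0 S j (X i' w 0 j)] = (fun w => X i' w 0 j0) @^-1` S.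
  apply/seteqP; split => w /=; first by move/(_ j0); rewrite /single eqxx.
  by move=> Sw j; rewrite /single; case: eqP => // ->.
have row i' : [set w | forall j, Bf i' j (X i' w 0 j)]
    = if i' == i then XA else if i' == k then XB else setT.
  rewrite /Bf; case: eqP => [->|_]; first exact: single_event.
  by case: eqP => [->|_]; [exact: single_event | apply/seteqP].
have rowE i' w : (forall j, Bf i' j (X i' w 0 j))
    = (if i' == i then XA else if i' == k then XB else setT) w.
  by rewrite -row.
have joint : [set w | forall i' j, Bf i' j (X i' w 0 j)] = XA `&` XB.
  apply/seteqP; split => w /=.
    move=> H; split.
      by move: (H i); rewrite rowE eqxx.
    by move: (H k); rewrite rowE (negbTE ki) eqxx.
  by move=> [HA HB] i'; rewrite rowE; case: eqP => _ //; case: eqP.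
have finE S : measurable S -> P S = (fine (P S))%:E.
  by move=> mS; rewrite fineK // fin_num_measure.
have := indX Bf mBf; rewrite joint (bigD1 i) //= (bigD1 k) //= big1; last first.
  by move=> i' /andP[ni nk]; rewrite row (negbTE ni) (negbTE nk) probability_setT.
rewrite !row eqxx (negbTE ki) eqxx mulr1 => H.
by rewrite (finE _ (measurableI _ _ mXA mXB)) H (finE _ mXA) (finE _ mXB).
Qed.

End RandomVectors.

Section SecondMoments.
Context {R : realType} {d : nat} {dd : measure_display} {Omega : measurableType dd}.
Variable P : probability Omega R.
Local Notation vec := 'rV[R]_d.

Lemma measurable_sqnorm (X : Omega -> vec) :
  (forall j, measurable_fun setT (fun w => X w 0 j)) ->
  measurable_fun setT (fun w => sqnorm (X w)).
Proof. by move=> mX; apply: measurable_sum => j; exact: measurable_funM. Qed.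

Lemma integrable_sqnorm (X : Omega -> vec) (b : R) :
  (forall j, measurable_fun setT (fun w => X w 0 j)) ->
  (\int[P]_w (sqnorm (X w))%:E <= b%:E)%E ->
  P.-integrable setT (fun w => (sqnorm (X w))%:E).
Proof.
move=> mX Xb; apply/integrableP; split; first exact/measurable_EFinP/measurable_sqnorm.
under eq_integral do rewrite gee0_abs ?lee_fin ?sqnorm_ge0 //.
by apply: le_lt_trans Xb _; rewrite ltry.
Qed.

Section Products.
Variables (X Y : Omega -> vec).
Hypotheses (mX : forall j, measurable_fun setT (fun w => X w 0 j))
  (mY : forall j, measurable_fun setT (fun w => Y w 0 j))
  (iX : P.-integrable setT (fun w => (sqnorm (X w))%:E))
  (iY : P.-integrable setT (fun w => (sqnorm (Y w))%:E)).

Lemma integrable_coord_mul j : P.-integrable setT (fun w => (X w 0 j * Y w 0 j)%:E).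
Proof.
apply: le_integrable (integrableD measurableT iX iY) => //.
  exact/measurable_EFinP/measurable_funM.
move=> w _; rewrite /= lee_fin (ger0_norm (addr_ge0 (sqnorm_ge0 _) (sqnorm_ge0 _))).
have := sqr_coord_le_sqnorm (X w) j; have := sqr_coord_le_sqnorm (Y w) j.
rewrite ler_norml; have := sqr_ge0 (X w 0 j + Y w 0 j); have := sqr_ge0 (X w 0 j - Y w 0 j).
by rewrite !expr2 => ? ? ? ?; apply/andP; split; nra.
Qed.

Lemma integrable_dotv : P.-integrable setT (fun w => (dotv (X w) (Y w))%:E).
Proof.
under eq_fun do rewrite -sumEFin.
by apply: (integrable_sum measurableT) => j _; exact: integrable_coord_mul.
Qed.

End Products.

Variables (n : nat) (X : 'I_n -> Omega -> vec).
Hypotheses (X_centered : forall i, centered_rvec P (X i))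
  (X_sqnorm : forall i, P.-integrable setT (fun w => (sqnorm (X i w))%:E))
  (X_indep : indep_rvecs P X).

Let mX i j : measurable_fun setT (fun w => X i w 0 j).
Proof. by have [] := X_centered i j. Qed.

Lemma integral_dotv_indep i k : i != k -> (\int[P]_w (dotv (X i w) (X k w))%:E = 0)%E.
Proof.
move=> ik; under eq_fun do rewrite -sumEFin.
rewrite (integral_sum measurableT); last by move=> j; exact: integrable_coord_mul.
apply: big1 => j _; have [_ iXi EXi] := X_centered i j; have [_ iXk _] := X_centered k j.
rewrite (integralM_indep (mX i j) (mX k j) iXi iXk); first by rewrite EXi mul0e.
  exact: integrable_coord_mul.
by move=> A B mA mB; apply: indep_rvecs_coord_pair.
Qed.

Lemma integrable_sqnorm_sum :
  P.-integrable setT (fun w => (sqnorm (\sum_(i < n) X i w))%:E).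
Proof.
under eq_fun do rewrite sqnorm_sum -sumEFin.
apply: (integrable_sum measurableT) => i _; under eq_fun do rewrite -sumEFin.
by apply: (integrable_sum measurableT) => k _; exact: integrable_dotv.
Qed.

Lemma integral_sqnorm_sum_indep :
  (\int[P]_w (sqnorm (\sum_(i < n) X i w))%:E = \sum_(i < n) \int[P]_w (sqnorm (X i w))%:E)%E.
Proof.
have iXX i k : P.-integrable setT (fun w => (dotv (X i w) (X k w))%:E).
  exact: integrable_dotv.
under eq_fun do rewrite sqnorm_sum -sumEFin; under eq_fun do under eq_bigr do rewrite -sumEFin.
rewrite (integral_sum measurableT); last first.
  by move=> i; apply: (integrable_sum measurableT) => k _.
apply: eq_bigr => i _; rewrite (integral_sum measurableT) // (bigD1 i) //= big1 ?adde0 //.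
by move=> k ki; apply: integral_dotv_indep; rewrite eq_sym.
Qed.

End SecondMoments.

Lemma integral_sqnorm_mean_compression_error {R : realType} {d n : nat}
    {dd : measure_display} {Omega : measurableType dd} (P : probability Omega R)
    (omega : R) (C : 'I_n -> Omega -> 'rV[R]_d -> 'rV[R]_d) (a : 'I_n -> 'rV[R]_d) :
  (forall i, unbiased_compressor P omega (C i)) -> indep_compressors P C ->
  (\int[P]_w (sqnorm (n%:R^-1 *: \sum_(i < n) (C i w (a i) - a i)))%:E
     <= (omega / n%:R ^+ 2 * \sum_(i < n) sqnorm (a i))%:E)%E.
Proof.
move=> C_unbiased C_indep; pose X i w := C i w (a i) - a i.
have X_centered i : centered_rvec P (X i) by exact: unbiased_compressor_centered.
have X_var i : (\int[P]_w (sqnorm (X i w))%:E <= (omega * sqnorm (a i))%:E)%E.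
  by have [_ []] := C_unbiased i (a i).
have X_sqnorm i : P.-integrable setT (fun w => (sqnorm (X i w))%:E).
  by apply: integrable_sqnorm (X_var i) => j; have [] := X_centered i j.
have X_indep : indep_rvecs P X by exact: indep_rvecs_shift.
under eq_integral do rewrite sqnormZ EFinM.
rewrite (integralZl measurableT (integrable_sqnorm_sum X_centered X_sqnorm)).
rewrite (integral_sqnorm_sum_indep X_centered X_sqnorm X_indep).
apply: (@le_trans _ _ ((n%:R^-1 ^+ 2)%:E * \sum_(i < n) (omega * sqnorm (a i))%:E)%E).
  apply: lee_wpmul2l; first by rewrite lee_fin exprn_ge0 // invr_ge0.
  by apply: lee_sum => i _; exact: X_var.
by rewrite sumEFin -EFinM lee_fin -mulr_sumr exprVn mulrA [_ * omega]mulrC.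
Qed.

Theorem lemma5
  (R : realType) (d n : nat) (fs : 'I_n -> 'rV[R]_d -> R)
  (L : 'I_n -> R) (hatL Lf mu omega : R) (xstar : 'rV[R]_d)
  (dd : measure_display) (Omega : measurableType dd) (P : probability Omega R)
  (CDy : 'I_n -> Omega -> 'rV[R]_d -> 'rV[R]_d)
  (* state at iteration t (fixed by conditioning on the first t iterations) *)
  (theta : R) (w z : 'rV[R]_d) (hs : 'I_n -> 'rV[R]_d) (h : 'rV[R]_d) :
  (0 < n)%N ->
  (* Assumption 1 *)
  (forall i, smooth (L i) (fs i)) ->
  0 < hatL ->
  (forall x y : 'rV[R]_d,
     n%:R^-1 * \sum_(i < n) sqnorm (grad (fs i) x - grad (fs i) y)
       <= hatL ^+ 2 * sqnorm (x - y)) ->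
  (* Assumption 2 *)
  smooth Lf (avgf fs) ->
  (* Assumption 3 *)
  (forall i, convex_fun (fs i)) ->
  0 <= mu -> strongly_convex mu (avgf fs) ->
  (forall x, avgf fs xstar <= avgf fs x) ->
  (* compressors C_i^{D,y} in U(omega), drawn independently (Assumption 4) *)
  0 <= omega ->
  (forall i, unbiased_compressor P omega (CDy i)) ->
  indep_compressors P CDy ->
  (* algorithm quantities *)
  0 <= theta <= 1 ->
  h = n%:R^-1 *: \sum_(i < n) hs i ->
  let y := theta *: w + (1 - theta) *: z in
  let g := fun o : Omega =>
    h + n%:R^-1 *: \sum_(i < n) CDy i o (grad (fs i) y - hs i) in
  (\int[P]_o (sqnorm (g o - grad (avgf fs) y))%:E <=
   ((2 * omega / (n%:R ^+ 2)) * \sum_(i < n) sqnorm (grad (fs i) z - hs i)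
    + (4 * omega * Lmax L / n%:R) *
        (avgf fs z - avgf fs y - dotv (grad (avgf fs) y) (z - y)))%:E)%E.
Proof.
(* only smoothness and convexity of the f_i are needed *)
move=> n_gt0 fs_smooth _ _ _ fs_convex _ _ _ omega_ge0 C_unbiased C_indep _ hE; cbv zeta.
set y := theta *: w + (1 - theta) *: z.
have fs_diff i x : differentiable (fs i) x by have [] := fs_smooth i.
pose a i := grad (fs i) y - hs i.
have gE o : h + n%:R^-1 *: \sum_(i < n) CDy i o (a i) - grad (avgf fs) y
    = n%:R^-1 *: \sum_(i < n) (CDy i o (a i) - a i).
  rewrite hE grad_avgf // -scalerDr -scalerBr !sumrB opprB addrA [in RHS]addrC.
  by congr (_ *: _); rewrite [LHS]addrC [X in _ + X]addrC.
under eq_integral do rewrite gE.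
apply: le_trans (integral_sqnorm_mean_compression_error a C_unbiased C_indep) _.
rewrite lee_fin -/(bregman (avgf fs) z y) bregman_avgf //.
have n_neq0 : n%:R != 0 :> R by rewrite pnatr_eq0 -lt0n.
have -> : 2 * omega / n%:R ^+ 2 * \sum_(i < n) sqnorm (grad (fs i) z - hs i)
    + 4 * omega * Lmax L / n%:R * (n%:R^-1 * \sum_(i < n) bregman (fs i) z y)
  = omega / n%:R ^+ 2 * (2 * \sum_(i < n) sqnorm (grad (fs i) z - hs i)
    + 4 * Lmax L * \sum_(i < n) bregman (fs i) z y) by field.
apply: ler_wpM2l; first by rewrite divr_ge0 ?exprn_ge0.
exact: sum_sqnorm_grad_shift_le.
Qed.
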